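(* Let $d \ge 2$, let $k \ge 0$, and let $A^{(1)},\dots,A^{(k)}$ be arbitrary parameter matrices of the appropriate sizes. Let $P \in \{0,1\}^{d\times d}$ be any permutation matrix other than the identity. Then there exists a matrix $Y \in \mathbb{R}^{d \times d}$ such that, when the $k$-layer decoder-only (causally masked), attention-only disentangled transformer with parameters $A^{(1)},\dots,A^{(k)}$ is run on the input $X = [P; Y_P]$ with $Y_P = PY$, the matrix $Y$ does not occur as a block of the final residual stream $h^{(k)}$, i.e. $Y$ is not equal to any submatrix of $h^{(k)}$ formed by $d$ consecutive rows and $d$ consecutive columns.
   Context: A permutation matrix $P \in \{0,1\}^{d\times d}$ has $i$-th row equal to the standard basis vector $e_{\pi(i)}$ for a permutation $\pi$ of $\{1,\dots,d\}$. For a matrix $Y \in \mathbb{R}^{d\times d}$ write $Y_P = PY$; the task of inverse permutation learning is to output $Y = P^{-1}Y_P = P^\top Y_P$. The input is $X = [P; Y_P] \in \mathbb{R}^{T \times d}$ (vertical stacking), $T = 2d$, and the initial residual stream is $h^{(0)} = [X, I_T] \in \mathbb{R}^{T \times (d+T)}$ (token embedding $X$ concatenated horizontally with one-hot position embeddings). Softmax $\mathcal{S}$ is applied row-wise, $\mathcal{S}(v)_i = \exp(v_i)/\sum_j\exp(v_j)$; $\mathrm{MASK}(V)_{ij} = V_{ij}$ if $i \ge j$ and $-\infty$ otherwise. The causally masked attention layer is $\mathrm{attn}(h;A) = \mathcal{S}(\mathrm{MASK}(hAh^\top))\,h$. The disentangled transformer computes $h^{(\ell+1)} = [\,h^{(\ell)},\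 \mathrm{attn}(h^{(\ell)};A^{(\ell+1)})\,]$ (horizontal concatenation) for $\ell = 0,\dots,k-1$, with $A^{(\ell+1)}$ square of size equal to the number of columns of $h^{(\ell)}$. The matrix $h^{(\ell)}$ is the residual stream at layer $\ell$; every $h^{(\ell)}$ is a submatrix of $h^{(k)}$. *)

(* concrete real numbers R, matrices as functions nat -> nat -> R
   whose entries are only meaningful inside the stated dimensions
   (entries outside are set to 0). *)
From Stdlib Require Import Reals Arith Lia.
Open Scope R_scope.

Fixpoint sumR (n : nat) (f : nat -> R) : R :=
  match n with
  | O => 0
  | S m => sumR m f + f m
  end.

Definition mat := nat -> nat -> R.

Definition perm_mx (pi : nat -> nat) : mat :=
  fun i j => if Nat.eqb j (pi i) then 1 else 0.

Definition mulmx (d : nat) (M N : mat) : mat :=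
  fun i j => sumR d (fun l => M i l * N l j).

Definition ntok (d : nat) : nat := 2 * d.

(* width (number of columns) of h^(l): d + T = 3d, doubled at each layer *)
Definition width (d l : nat) : nat := 2 ^ l * (3 * d).

(* h^(0) = [X, I_T] with X = [P; Y_P], Y_P = P Y *)
Definition h0 (d : nat) (P Y : mat) : mat :=
  fun i c =>
    if Nat.ltb i (ntok d) then
      if Nat.ltb c d then
        (if Nat.ltb i d then P i c else mulmx d P Y (i - d)%nat c)
      else if Nat.ltb c (d + ntok d) then
        (if Nat.eqb (c - d)%nat i then 1 else 0)
      else 0
    else 0.

(* causally masked attention S(MASK(h A h^T)) h, for h with T rows, w columns.
   Masked entries (j > i) get weight exp(-oo) = 0, so row i is a softmax
   over j = 0..i. *)
Definition score (w : nat) (h : mat) (A : mat) (i j : nat) : R :=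
  sumR w (fun a => sumR w (fun b => h i a * A a b * h j b)).

Definition attn (w : nat) (h : mat) (A : mat) : mat :=
  fun i c =>
    let Z := sumR (S i) (fun j => exp (score w h A i j)) in
    sumR (S i) (fun j => exp (score w h A i j) / Z * h j c).

Definition layer (d l : nat) (h : mat) (A : mat) : mat :=
  fun i c =>
    if Nat.ltb i (ntok d) then
      if Nat.ltb c (width d l) then h i c
      else if Nat.ltb c (2 * width d l) then attn (width d l) h A i (c - width d l)%nat
      else 0
    else 0.

(* residual stream h^(k); As l is the parameter matrix A^(l+1)
   (a (width d l) x (width d l) matrix) *)
Fixpoint resid (d : nat) (As : nat -> mat) (P Y : mat) (k : nat) : mat :=
  match k with
  | O => h0 d P Y
  | S l => layer d l (resid d As P Y l) (As l)
  end.

(* Choose Y with entries 2 + i + j, so that its largest entry M = 2d is attained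
   at (d-1, d-1) and exceeds every entry of P and of the position embedding.
   In every layer, all entries stay <= M, and entries in row 0 or in a column
   >= d stay < M: causal softmax gives row 0 positive weight in every output
   row, so each attention output is a convex combination with a positive weight
   on a value < M.  Hence a block equal to Y must lie in the first d columns,
   i.e. inside X = [P; PY]; its (0,0) entry 2 rules out P, so the block is PY,
   and PY = Y would force P = I on the first column. *)
From Stdlib Require Import Reals Arith Lia Lra.
Open Scope R_scope.

Lemma sumR_ext n f g :
  (forall j, (j < n)%nat -> f j = g j) -> sumR n f = sumR n g.
Proof.
  induction n as [|n IH]; intros Hfg; simpl; auto.
  rewrite IH by (intros; apply Hfg; lia).
  now rewrite Hfg by lia.
Qed.

Lemma sumR_mult_l n a g : sumR n (fun j => a * g j) = a * sumR n g.
Proof. induction n as [|n IH]; simpl; [ring | rewrite IH; ring]. Qed.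

Lemma sumR_pos n e : (forall j, 0 < e j) -> 0 < sumR (S n) e.
Proof.
  intros He; induction n as [|n IH]; simpl in *.
  - specialize (He 0%nat); lra.
  - specialize (He (S n)); lra.
Qed.

Lemma sumR_weighted_lt n e x M :
  (forall j, 0 < e j) -> (forall j, (j <= n)%nat -> x j <= M) -> x 0%nat < M ->
  sumR (S n) (fun j => e j * x j) < M * sumR (S n) e.
Proof.
  intros He Hx Hx0; induction n as [|n IH]; simpl in *.
  - specialize (He 0%nat); nra.
  - assert (IH' := IH ltac:(intros; apply Hx; lia)).
    specialize (He (S n)); specialize (Hx (S n) ltac:(lia)); nra.
Qed.

Lemma weighted_avg_lt n e x M :
  (forall j, 0 < e j) -> (forall j, (j <= n)%nat -> x j <= M) -> x 0%nat < M ->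
  sumR (S n) (fun j => e j / sumR (S n) e * x j) < M.
Proof.
  intros He Hx Hx0.
  assert (HZ := sumR_pos n e He).
  rewrite (sumR_ext _ _ (fun j => / sumR (S n) e * (e j * x j)))
    by (intros; unfold Rdiv; ring).
  rewrite sumR_mult_l.
  assert (Hlt := sumR_weighted_lt n e x M He Hx Hx0).
  apply (Rmult_lt_reg_l (sumR (S n) e)); auto.
  rewrite <- Rmult_assoc, Rinv_r by lra; lra.
Qed.

Lemma attn_lt w h A M i c :
  (forall j, (j <= i)%nat -> h j c <= M) -> h 0%nat c < M -> attn w h A i c < M.
Proof.
  intros Hle Hlt; apply weighted_avg_lt; auto.
  intros; apply exp_pos.
Qed.

Lemma sumR_delta n p g :
  sumR n (fun l => (if Nat.eqb l p then 1 else 0) * g l) =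
  if Nat.ltb p n then g p else 0.
Proof.
  induction n as [|n IH]; simpl.
  - now destruct (Nat.ltb_spec p 0); [lia|].
  - rewrite IH.
    destruct (Nat.eqb_spec n p), (Nat.ltb_spec p n), (Nat.ltb_spec p (S n));
      try lia; subst; ring.
Qed.

Lemma mulmx_perm_mx d pi Y i c :
  (pi i < d)%nat -> mulmx d (perm_mx pi) Y i c = Y (pi i) c.
Proof.
  intros Hpi; unfold mulmx, perm_mx.
  rewrite sumR_delta.
  now destruct (Nat.ltb_spec (pi i) d); [|lia].
Qed.

Lemma perm_mx_le1 pi i c : perm_mx pi i c <= 1.
Proof. unfold perm_mx; destruct (Nat.eqb c (pi i)); lra. Qed.

Lemma h0_top d P Y i c :
  (i < d)%nat -> (c < d)%nat -> h0 d P Y i c = P i c.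
Proof.
  intros Hi Hc; unfold h0, ntok.
  destruct (Nat.ltb_spec i (2 * d)), (Nat.ltb_spec c d), (Nat.ltb_spec i d);
    lia || auto.
Qed.

Lemma h0_bottom d P Y i c :
  (d <= i)%nat -> (i < 2 * d)%nat -> (c < d)%nat -> h0 d P Y i c = mulmx d P Y (i - d)%nat c.
Proof.
  intros Hdi Hi Hc; unfold h0, ntok.
  destruct (Nat.ltb_spec i (2 * d)), (Nat.ltb_spec c d), (Nat.ltb_spec i d);
    lia || auto.
Qed.

Lemma resid_low_cols d As P Y l i c :
  (c < 3 * d)%nat -> resid d As P Y l i c = h0 d P Y i c.
Proof.
  intros Hc; induction l as [|l IH]; simpl; auto.
  unfold layer.
  assert (3 * d <= width d l)%nat.
  { unfold width.
    assert (1 <= 2 ^ l)%nat by (apply Nat.neq_0_lt_0, Nat.pow_nonzero; lia).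
    nia. }
  destruct (Nat.ltb_spec i (ntok d)).
  - now destruct (Nat.ltb_spec c (width d l)); [|lia].
  - unfold h0; now destruct (Nat.ltb_spec i (ntok d)); [lia|].
Qed.

Definition capped (d : nat) (M : R) (h : mat) : Prop :=
  (forall i c, h i c <= M) /\
  (forall c, h 0%nat c < M) /\
  (forall i c, (d <= c)%nat -> h i c < M).

Lemma layer_capped d M l h A :
  0 < M -> capped d M h -> capped d M (layer d l h A).
Proof.
  intros HM (Hle & Hrow0 & Hcols).
  assert (Hattn : forall i c, attn (width d l) h A i c < M)
    by (intros; apply attn_lt; auto).
  repeat split.
  - intros i c; unfold layer.
    destruct (Nat.ltb i (ntok d)); [|lra].
    destruct (Nat.ltb c (width d l)); auto.
    destruct (Nat.ltb c (2 * width d l)); [apply Rlt_le, Hattn | lra].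
  - intros c; unfold layer.
    destruct (Nat.ltb 0 (ntok d)); auto.
    destruct (Nat.ltb c (width d l)); auto.
    destruct (Nat.ltb c (2 * width d l)); auto.
  - intros i c Hc; unfold layer.
    destruct (Nat.ltb i (ntok d)); auto.
    destruct (Nat.ltb c (width d l)); auto.
    destruct (Nat.ltb c (2 * width d l)); auto.
Qed.

Lemma resid_capped d As P Y M l :
  0 < M -> capped d M (h0 d P Y) -> capped d M (resid d As P Y l).
Proof.
  intros HM H0; induction l as [|l IH]; simpl; auto.
  now apply layer_capped.
Qed.

(* The offset 2 keeps Y 0 0 out of the range {0, 1} of the entries of P. *)
Definition ramp : mat := fun i j => INR (2 + i + j).

Section RampInput.

Variables (d : nat) (pi : nat -> nat).
Hypothesis Hd : (2 <= d)%nat.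
Hypothesis Hpi : forall i, (i < d)%nat -> (pi i < d)%nat.

Lemma ramp_max : ramp (d - 1)%nat (d - 1)%nat = INR (2 * d).
Proof. unfold ramp; f_equal; lia. Qed.

Lemma h0_ramp_capped : capped d (INR (2 * d)) (h0 d (perm_mx pi) ramp).
Proof.
  assert (HM : 1 < INR (2 * d)) by (apply (lt_INR 1); lia).
  assert (Hsmall : forall i c, (d <= c)%nat \/ (i < d)%nat ->
            h0 d (perm_mx pi) ramp i c <= 1).
  { intros i c Hic; unfold h0, ntok.
    destruct (Nat.ltb_spec i (2 * d)); [|lra].
    destruct (Nat.ltb_spec c d).
    - destruct (Nat.ltb_spec i d); [apply perm_mx_le1 | lia].
    - destruct (Nat.ltb c (d + 2 * d)); [|lra].
      destruct (Nat.eqb (c - d) i); lra. }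
  assert (Hlt : forall i c, (d <= c)%nat \/ (i < d)%nat ->
            h0 d (perm_mx pi) ramp i c < INR (2 * d))
    by (intros; apply (Rle_lt_trans _ 1); auto).
  repeat split; try (intros; apply Hlt; lia).
  intros i c.
  destruct (Nat.lt_ge_cases c d), (Nat.lt_ge_cases i d);
    try (apply Rlt_le, Hlt; lia).
  destruct (Nat.lt_ge_cases i (2 * d)).
  - rewrite h0_bottom, mulmx_perm_mx by (try apply Hpi; lia).
    apply le_INR.
    assert (pi (i - d) < d)%nat by (apply Hpi; lia); lia.
  - unfold h0, ntok; destruct (Nat.ltb_spec i (2 * d)); [lia | lra].
Qed.

End RampInput.

Theorem theorem1 (d k : nat) (As : nat -> mat) (pi : nat -> nat) :
  (2 <= d)%nat ->
  (forall i, (i < d)%nat -> (pi i < d)%nat) ->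
  (forall i j, (i < d)%nat -> (j < d)%nat -> pi i = pi j -> i = j) ->
  (exists i, (i < d)%nat /\ pi i <> i) ->
  exists Y : mat,
    forall r c : nat,
      (r + d <= ntok d)%nat -> (c + d <= width d k)%nat ->
      ~ (forall i j, (i < d)%nat -> (j < d)%nat ->
           resid d As (perm_mx pi) Y k (r + i)%nat (c + j)%nat = Y i j).
Proof.
  intros Hd Hpi _ [i0 [Hi0 Hmoved]].
  exists ramp; intros r c Hr _ Hblock; unfold ntok in Hr.
  assert (HM : 0 < INR (2 * d)) by (apply (lt_INR 0); lia).
  destruct (resid_capped d As (perm_mx pi) ramp _ k HM (h0_ramp_capped d pi Hd Hpi))
    as (_ & _ & Hcols).
  assert (Hc0 : c = 0%nat).
  { assert (Hmax := Hblock (d - 1)%nat (d - 1)%nat ltac:(lia) ltac:(lia)).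
    rewrite (ramp_max d Hd) in Hmax.
    destruct (Nat.lt_ge_cases (c + (d - 1)) d) as [|Hge]; [lia|].
    specialize (Hcols (r + (d - 1))%nat _ Hge); exfalso; lra. }
  subst c.
  assert (HX : forall i j, (i < d)%nat -> (j < d)%nat ->
            h0 d (perm_mx pi) ramp (r + i)%nat j = ramp i j).
  { intros i j Hi Hj; rewrite <- (resid_low_cols d As _ _ k) by lia.
    exact (Hblock i j Hi Hj). }
  assert (Hrd : r = d).
  { assert (H00 := HX 0%nat 0%nat ltac:(lia) ltac:(lia)).
    destruct (Nat.lt_ge_cases r d); [|lia].
    rewrite h0_top in H00 by lia.
    assert (H1 := perm_mx_le1 pi (r + 0) 0).
    unfold ramp in H00; simpl in H00; lra. }
  subst r.
  assert (Hcol0 := HX i0 0%nat Hi0 ltac:(lia)).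
  rewrite h0_bottom, mulmx_perm_mx in Hcol0 by (try apply Hpi; lia).
  replace (d + i0 - d)%nat with i0 in Hcol0 by lia.
  apply INR_eq in Hcol0; lia.
Qed.
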